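(* Let $k\in\mathbb N$ and let $\pi$ be a partition of $\{1,\dots,k\}$ with $q$ blocks. Then every graph that is consistent with $\pi$ has at most $k-q+1$ connected components.
   Context: Let $\pi$ be a partition of $\{1,\dots,k\}$ with blocks $B^{(1)},\dots,B^{(q)}$; indices are taken cyclically, i.e. $0$ is identified with $k$ and $k+1$ with $1$. The closed blocks are $\overline B^{(s)}=B^{(s)}\cup\{l\in\{1,\dots,k\}: l-1\in B^{(s)}\}$. The multiplicity $m_\pi(l)$ of $l\in\{1,\dots,k\}$ is $2$ if $l$ and $l-1$ lie in the same block of $\pi$, and $1$ otherwise. A graph consistent with $\pi$ is an undirected multigraph $G$ (loops allowed, a loop contributing $2$ to the degree) with vertex set $\{1,\dots,k\}$ and $k$ edges, whose edge set can be written as a disjoint union $E^{(1)}\cup\dots\cup E^{(q)}$ such that for each $s$, all edges of $E^{(s)}$ have both ends in $\overline B^{(s)}$ and, in the subgraph with vertex set $\overline B^{(s)}$ and edge set $E^{(s)}$, every vertex $l$ has degree $m_\pi(l)$. *)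

(* Vertices {1..k} of the paper are encoded as 'I_k
   (paper's l corresponds to ordinal l-1); cyclic predecessor = ord_pred. *)
From mathcomp Require Import all_boot.
Set Implicit Arguments. Unset Strict Implicit. Unset Printing Implicit Defensive.

Section Defs.
Variable k : nat.

(* cyclic predecessor l-1 (with 0 identified with k) *)
Definition cprev (l : 'I_k) : 'I_k := ord_pred l.

Definition closed_block (B : {set 'I_k}) : {set 'I_k} :=
  B :|: [set l | cprev l \in B].

Definition mult (P : {set {set 'I_k}}) (l : 'I_k) : nat :=
  if [exists B in P, (l \in B) && (cprev l \in B)] then 2 else 1.

(* A multigraph on vertex set 'I_k with k edges: edge e has endpoints
   (E e).1 and (E e).2 (unordered; a loop has equal endpoints). *)
Definition edge_fun := 'I_k -> 'I_k * 'I_k.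

(* degree of v in the subgraph with edge set A; a loop counts twice *)
Definition deg_in (E : edge_fun) (A : {set 'I_k}) (v : 'I_k) : nat :=
  #|[set e in A | (E e).1 == v]| + #|[set e in A | (E e).2 == v]|.

(* consistency with the partition P: edge colouring c assigns each edge to a block *)
Definition consistent (P : {set {set 'I_k}}) (E : edge_fun) : Prop :=
  exists c : 'I_k -> {set 'I_k},
    (forall e, c e \in P) /\
    forall B, B \in P ->
      (forall e, c e = B -> ((E e).1 \in closed_block B) /\ ((E e).2 \in closed_block B)) /\
      (forall l, l \in closed_block B ->
         deg_in E [set e | c e == B] l = mult P l).

Definition adj (E : edge_fun) : rel 'I_k :=
  fun a b => [exists e, (((E e).1 == a) && ((E e).2 == b))
                      || (((E e).2 == a) && ((E e).1 == b))].

Definition n_components (E : edge_fun) : nat :=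
  #|[set [set y | connect (adj E) x y] | x : 'I_k]|.
End Defs.

From mathcomp Require Import all_boot zify.
Set Implicit Arguments. Unset Strict Implicit. Unset Printing Implicit Defensive.

(* Count edges rather than vertices.  Label each edge e by its colour c e (the
   block of the partition it belongs to) and by the connected component
   containing it, and call two edges linked when they share a label.  Going
   around the cycle 1, 2, ..., k, a vertex l lies in the closed block of its
   own block B and l + 1 does too, so both are met by edges of colour B; hence
   the linking relation is connected.  A set of k items covered by two labels
   whose sharing relation is connected carries at most k + 1 labels in total
   (each item added to a connected set brings at most one new label), so
   #colours + #components <= k + 1, while #colours >= q because every block
   is the colour of some edge. *)

Section TwoLabellings.
Variables (T A B : finType) (a : T -> A) (b : T -> B).

Definition linked (x y : T) : bool := (a x == a y) || (b x == b y).

Hypothesis linked_closed_setT : forall S : {set T},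
  S != set0 -> {in S, forall y x, linked x y -> x \in S} -> S = setT.

Lemma linked_crossing (S : {set T}) : S != set0 -> S != setT ->
  exists x y, [/\ x \notin S, y \in S & linked x y].
Proof.
move=> S0 ST.
have /existsP [x /existsP [y /and3P [xS yS lxy]]] :
    [exists x, exists y, [&& x \notin S, y \in S & linked x y]].
  apply: contraT => /existsPn noX; case/eqP: ST; apply: linked_closed_setT => // y yS x lxy.
  by apply: contraT => xS; have /existsPn/(_ y) := noX x; rewrite xS yS lxy.
by exists x, y.
Qed.

Lemma exists_set_few_labels n : 0 < n <= #|T| ->
  exists S : {set T}, #|S| = n /\ #|a @: S| + #|b @: S| <= n + 1.
Proof.
elim: n => [|[|n] IH] // /andP [_ hn].
  case/card_gt0P: hn => x0 _.
  by exists [set x0]; rewrite cards1 !imset_set1 !cards1.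
have [S [cS labS]] := IH (ltnW hn).
have S0 : S != set0 by rewrite -card_gt0 cS.
have ST : S != setT by apply: contraTneq hn => ST; rewrite -cS ST cardsT ltnn.
have [x [y [xS yS lxy]]] := linked_crossing S0 ST.
exists (x |: S); rewrite cardsU1 xS cS; split=> //.
rewrite !imsetU1 !cardsU1; case/orP: lxy => /eqP lxy.
- have -> : a x \in a @: S by rewrite lxy imset_f.
  by case: (b x \in b @: S) labS => /=; lia.
- have -> : b x \in b @: S by rewrite lxy imset_f.
  by case: (a x \in a @: S) labS => /=; lia.
Qed.

Lemma card_labels_connected : #|a @: [set: T]| + #|b @: [set: T]| <= #|T| + 1.
Proof.
have [T0 | T_gt0] := posnP #|T|.
  have -> : [set: T] = set0 by apply/eqP; rewrite -cards_eq0 cardsT T0.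
  by rewrite !imset0 !cards0.
have [|S [cS labS]] := @exists_set_few_labels #|T|; first by rewrite T_gt0 /=.
suff ST : S = setT by rewrite -ST.
by apply/eqP; rewrite eqEcard subsetT cS cardsT leqnn.
Qed.

End TwoLabellings.

Section Multigraph.
Variables (k : nat) (E : edge_fun k).

Definition incident (e v : 'I_k) : bool := ((E e).1 == v) || ((E e).2 == v).

Definition component (v : 'I_k) : {set 'I_k} := [set y | connect (adj E) v y].

Definition edge_component (e : 'I_k) : {set 'I_k} := component (E e).1.

Lemma adj_sym : symmetric (adj E).
Proof.
move=> u v; apply: eq_existsb => e; rewrite orbC.
by congr (_ || _); apply: andbC.
Qed.

Lemma component_adj u v : adj E u v -> component u = component v.
Proof.
move=> uv; apply/setP => y; rewrite !inE; apply/idP/idP.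
- by apply: connect_trans; rewrite (sym_connect_sym adj_sym) connect1.
- exact: connect_trans (connect1 uv).
Qed.

Lemma component_incident e v : incident e v -> component (E e).1 = component v.
Proof.
case/orP => /eqP <- //; apply: component_adj.
by apply/existsP; exists e; rewrite !eqxx.
Qed.

Lemma deg_in_gt0 (A : {set 'I_k}) v : 0 < deg_in E A v ->
  exists2 e, e \in A & incident e v.
Proof.
rewrite addn_gt0 => /orP [] /card_gt0P [e]; rewrite inE => /andP [eA ev];
  by exists e; rewrite // /incident ev ?orbT.
Qed.

End Multigraph.

Lemma val_iter_ordS k (w : 'I_k) i : val (iter i (@ordS k) w) = (w + i) %% k.
Proof.
elim: i => [|i IH] /=; first by rewrite addn0 modn_small.
by rewrite IH -addn1 modnDml addn1 addnS.
Qed.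

Lemma ordS_closed_setT k (W : {set 'I_k}) w : w \in W ->
  {in W, forall v, ordS v \in W} -> W = setT.
Proof.
move=> wW WS; apply/setP => v; rewrite inE.
have -> : v = iter (v + k - w) (@ordS k) w.
  apply: val_inj; rewrite val_iter_ordS subnKC; last by have := ltn_ord w; lia.
  by rewrite modnDr modn_small.
by elim: (v + k - w) => //= i; apply: WS.
Qed.

Section Consistent.
Variables (k : nat) (P : {set {set 'I_k}}) (E : edge_fun k) (c : 'I_k -> {set 'I_k}).
Hypothesis partP : partition P [set: 'I_k].
Hypothesis colour_deg : forall B, B \in P ->
  forall l, l \in closed_block B -> deg_in E [set e | c e == B] l = mult P l.

Lemma exists_colour_incident B v : B \in P -> v \in closed_block B ->
  exists2 e, c e = B & incident E e v.
Proof.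
move=> BP vB; have [|e] := @deg_in_gt0 _ E [set e | c e == B] v.
  by rewrite colour_deg // /mult; case: ifP.
by rewrite inE => /eqP; exists e.
Qed.

Lemma pblock_partition v : pblock P v \in P /\ v \in pblock P v.
Proof.
have [/eqP covP _ _] := and3P partP.
by rewrite mem_pblock pblock_mem covP ?inE.
Qed.

Lemma exists_pblock_colour_incident v : exists2 e, c e = pblock P v & incident E e v.
Proof.
have [BP vB] := pblock_partition v.
by apply: exists_colour_incident; rewrite // inE vB.
Qed.

Lemma linked_colour_component_closed (S : {set 'I_k}) : S != set0 ->
  {in S, forall y x, linked c (edge_component E) x y -> x \in S} -> S = setT.
Proof.
move=> /set0Pn [e0 e0S] closedS.
pose W := [set v | [exists e in S, incident E e v]].
have touchW v : v \in W -> exists2 e, e \in S & incident E e v.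
  by rewrite inE => /exists_inP.
have W_ordS : {in W, forall v, ordS v \in W}.
  move=> v /touchW [e eS ev]; have [BP vB] := pblock_partition v.
  have [f cf fv] := exists_pblock_colour_incident v.
  have [g cg gv] : exists2 g, c g = pblock P v & incident E g (ordS v).
    by apply: exists_colour_incident; rewrite // !inE /cprev ordSK vB orbT.
  have fS : f \in S.
    by apply: closedS eS _ _; rewrite /linked /edge_component
      (component_incident fv) (component_incident ev) eqxx orbT.
  have gS : g \in S by apply: closedS fS _ _; rewrite /linked cg cf eqxx.
  by rewrite inE; apply/exists_inP; exists g.
have W0 : (E e0).1 \in W by rewrite inE; apply/exists_inP; exists e0; rewrite // /incident eqxx.
have allW := ordS_closed_setT W0 W_ordS.
apply/setP => x; rewrite inE.
have /touchW [e eS ex] : (E x).1 \in W by rewrite allW inE.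
by apply: closedS eS _ _; rewrite /linked /edge_component (component_incident ex) eqxx orbT.
Qed.

Lemma card_partition_le_colours : #|P| <= #|c @: [set: 'I_k]|.
Proof.
have [_ _ P0] := and3P partP.
apply/subset_leq_card/subsetP => B BP.
have /set0Pn [v vB] : B != set0 by apply: contraNneq P0 => <-.
have [e <- _] : exists2 e, c e = B & incident E e v.
  by apply: exists_colour_incident; rewrite // inE vB.
by rewrite imset_f.
Qed.

Lemma n_components_le_edge_components :
  n_components E <= #|edge_component E @: [set: 'I_k]|.
Proof.
apply/subset_leq_card/subsetP => _ /imsetP [v _ ->].
have [e _ ev] := exists_pblock_colour_incident v.
by apply/imsetP; exists e; rewrite // /edge_component (component_incident ev).
Qed.

End Consistent.

Theorem mainTheorem2 (k : nat) (P : {set {set 'I_k}}) (E : edge_fun k) :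
  partition P [set: 'I_k] ->
  consistent P E ->
  n_components E <= k - #|P| + 1.
Proof.
move=> partP [c [_ colour_ok]].
have colour_deg B (BP : B \in P) := (colour_ok B BP).2.
have := card_labels_connected (linked_colour_component_closed partP colour_deg).
have := card_partition_le_colours partP colour_deg.
have := n_components_le_edge_components partP colour_deg.
have := leq_imset_card c [set: 'I_k]; rewrite cardsT card_ord.
set colours := #|c @: _|; set components := #|edge_component E @: _|.
lia.
Qed.
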